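(* For every integer $k\ge 2$ there exists a $k$-januarial of simple type with $h=1$, i.e. whose common graph $\Upsilon$ is a single simple circuit.
   Context: Let $\Delta(2,k,\ell)=\langle x,y:x^2=y^k=(xy)^\ell=1\rangle$, acting on a finite set $S$. The coset graph has: - vertex set $S$; - an undirected $x$-edge joining each pair of points transposed by $x$; - a directed $y$-edge $u\to uy$. It is $2$-cell embedded in a closed orientable surface via the rotation system (incoming $y$-edge, outgoing $y$-edge, $x$-edge) at each vertex. The faces are $y$-faces and $xy$-faces; this is the coset diagram. A $k$-januarial is the coset diagram of an action of $\Delta(2,k,\ell)$, for some $\ell$, in which $\langle xy\rangle$ has exactly two orbits, each of size $|S|/2$. Let $S_1,S_2$ be the closures of its two $xy$-faces. Collapsing each $y$-face to a point gives the companion diagram, with images $S_i'$ of $S_i$. The common graph is $\Upsilon=S_1'\cap S_2'$. The januarial is of simple type if $\Upsilon$ is a union of $h$ pairwise disjoint simple circuits. *)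

From mathcomp Require Import all_boot all_fingroup.
Set Implicit Arguments. Unset Strict Implicit. Unset Printing Implicit Defensive.
Local Open Scope group_scope.

(* Points of S are the elements of a finite type T; x, y : {perm T} act on the
   right: u^x = x u, and u^(xy) = (x * y) u  (mathcomp: (s * t) u = t (s u)). *)

(* A transitive action of Delta(2,k,l) = <x,y | x^2 = y^k = (xy)^l = 1> on T,
   for some l; the permutation y has order exactly k. *)
Definition triangle_action (k : nat) (T : finType) (x y : {perm T}) : Prop :=
  [/\ x ^+ 2 = 1, #[y] = k,
      (exists2 l : nat, 0 < l & (x * y) ^+ l = 1)
    & forall u v : T, exists2 g, g \in <<[set x; y]>> & g u = v].

Definition januarial (k : nat) (T : finType) (x y : {perm T}) : Prop :=
  [/\ triangle_action k x y,
      #|porbits (x * y)| = 2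
    & forall O, O \in porbits (x * y) -> (#|O| * 2 = #|T|)%N].

(* Companion diagram: vertices = <y>-orbits (collapsed y-faces),
   edges = x-edges {u, x u}, faces = <xy>-orbits.  The closure S_i' of the
   xy-face O_i contains the vertices (y-orbits) meeting O_i and the x-edges
   {u, x u} with u \in O_i or x u \in O_i.  The common graph
   Upsilon = S_1' :&: S_2' therefore has: *)

(* vertices: y-orbits meeting every (i.e. both) xy-face *)
Definition common_vertices (T : finType) (x y : {perm T}) : {set {set T}} :=
  [set V in porbits y | [forall O in porbits (x * y), V :&: O != set0]].

(* edges: x-edges whose two sides lie in different xy-faces *)
Definition common_edges (T : finType) (x y : {perm T}) : {set {set T}} :=
  [set [set u; x u] | u in [pred u | porbit (x * y) u != porbit (x * y) (x u)]].

Definition joins (T : finType) (x y : {perm T}) (e v w : {set T}) : Prop :=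
  exists u, [/\ e = [set u; x u], porbit y u = v & porbit y (x u) = w].

Definition common_graph_is_simple_circuit (T : finType) (x y : {perm T}) : Prop :=
  exists (n : nat) (vs es : seq {set T}),
    [/\ 0 < n, size vs = n, size es = n, uniq vs & uniq es] /\
    [/\ common_vertices x y = [set v in vs],
        common_edges x y = [set e in es]
      & forall i, i < n ->
          joins x y (nth set0 es i) (nth set0 vs i) (nth set0 vs ((i.+1) %% n))].

Definition januarial_simple_h1 (k : nat) (T : finType) (x y : {perm T}) : Prop :=
  januarial k x y /\ common_graph_is_simple_circuit x y.

From mathcomp Require Import all_boot all_fingroup.
From mathcomp Require Import cyclic.
Set Implicit Arguments. Unset Strict Implicit. Unset Printing Implicit Defensive.
Local Open Scope group_scope.

(* Take two y-cycles of length k, the points (b, i) of bool * 'I_k with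
   y : (b, i) |-> (b, i + 1), and let x swap the two cycles at positions 0 and 1
   and fix every other point.  Conjugating y by the involution
   (b, i) |-> (b xor [i = 1], i) gives exactly xy, so xy also has two cycles of
   length k.  Each y-cycle meets both xy-cycles, and the only x-edges between
   the two xy-faces are the two rungs at positions 0 and 1, so the common graph
   is a circuit of length two. *)

Lemma val_iter_ordS p (i : 'I_p) m : val (iter m (@ordS p) i) = (i + m) %% p.
Proof.
elim: m => [|m IHm] /=; first by rewrite addn0 modn_small.
by rewrite IHm -[_.+1]addn1 modnDml addn1 addnS.
Qed.

Lemma ordS_eq1 p (i : 'I_p.+2) : (ordS i == 1 :> nat)%N = (i == 0 :> nat)%N.
Proof.
case: i => i /= lt_ip.
by case: (ltngtP i.+1 p.+2) lt_ip => // [/modn_small-> | [->]]; rewrite ?modnn.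
Qed.

Lemma mem_porbitJ (T : finType) (s t : {perm T}) u v :
  (t v \in porbit (s ^ t) (t u)) = (v \in porbit s u).
Proof.
apply/porbitP/porbitP => -[i def_v]; exists i; last by rewrite def_v -conjXg permJ.
by apply: (@perm_inj _ t); rewrite def_v -conjXg permJ.
Qed.

Lemma porbits_bool (T : finType) (s : {perm T}) (P : bool -> {set T})
    (f : T -> bool) (a0 a1 : T) :
  (forall u, porbit s u = P (f u)) -> f a0 = false -> f a1 = true ->
  porbits s = [set P false; P true].
Proof.
move=> sP fa0 fa1; apply/setP => V; apply/imsetP/set2P => [[u _ ->]|[->|->]].
- by rewrite sP; case: (f u); [right | left].
- by exists a0; rewrite ?sP ?fa0.
- by exists a1; rewrite ?sP ?fa1.
Qed.

Section Ladder.

Variable n : nat.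
Local Notation k := n.+2.
Local Notation T := (bool * 'I_k)%type.

Definition spin_fun (u : T) : T := (u.1, ordS u.2).
Definition bridge_fun (u : T) : T := if u.2 < 2 then (~~ u.1, u.2) else u.
Definition twist_fun (u : T) : T := (u.1 (+) (u.2 == 1 :> nat)%N, u.2).

Lemma spin_fun_inj : injective spin_fun.
Proof. by move=> [a i] [b j] [-> eq_ij]; congr pair; apply/ordS_inj/val_inj. Qed.

Lemma bridge_funK : involutive bridge_fun.
Proof.
move=> [b i]; rewrite /bridge_fun.
by case: (ltnP i 2) => /= [-> | i_ge2]; rewrite ?negbK // ltnNge i_ge2.
Qed.

Lemma twist_funK : involutive twist_fun.
Proof. by move=> [b i]; rewrite /twist_fun /= addbK. Qed.

Definition spin : {perm T} := perm spin_fun_inj.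
Definition bridge : {perm T} := perm (inv_inj bridge_funK).
Definition twist : {perm T} := perm (inv_inj twist_funK).

Definition ord_one : 'I_k := Ordinal (isT : 1 < k)%N.

Lemma bridgeK : involutive bridge.
Proof. by move=> u; rewrite !permE bridge_funK. Qed.

Lemma twistK : involutive twist.
Proof. by move=> u; rewrite !permE twist_funK. Qed.

Lemma bridge_low b (i : 'I_k) : i < 2 -> bridge (b, i) = (~~ b, i).
Proof. by move=> i_lt2; rewrite permE /bridge_fun /= i_lt2. Qed.

Lemma bridge_high b (i : 'I_k) : 2 <= i -> bridge (b, i) = (b, i).
Proof. by move=> i_ge2; rewrite permE /bridge_fun /= ltnNge i_ge2. Qed.

Lemma spinX m (u : T) : (spin ^+ m) u = (u.1, iter m (@ordS k) u.2).
Proof. by rewrite permX; elim: m => [|m /= ->]; [case: u | rewrite permE]. Qed.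

Lemma order_spin : #[spin] = k.
Proof.
apply/eqP; rewrite eqn_dvd; apply/andP; split.
  rewrite order_dvdn; apply/eqP/permP => -[b i]; rewrite spinX perm1.
  by congr pair; apply: val_inj; rewrite val_iter_ordS modnDr modn_small.
have := congr1 (fun g : {perm T} => val (g (false, ord0)).2) (expg_order spin).
by rewrite spinX perm1 val_iter_ordS /= add0n => /eqP.
Qed.

Lemma mem_porbit_spin u v : (v \in porbit spin u) = (v.1 == u.1).
Proof.
apply/porbitP/eqP => [[m ->]|]; first by rewrite spinX.
case: u v => [b i] [c j] /= ->; exists (j + (k - i)); rewrite spinX.
congr pair; apply: val_inj; rewrite val_iter_ordS addnCA subnKC 1?ltnW //.
by rewrite modnDr modn_small.
Qed.

Lemma bridge_spin_conj : bridge * spin = spin ^ twist.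
Proof.
apply/permP => v; rewrite -(permKV twist v) permJ permM.
case: (twist^-1 v) => b i; rewrite !permE /bridge_fun /twist_fun /spin_fun /=.
by rewrite ordS_eq1; case: i => -[|[|i]] lt_ik; rewrite /= ?addbT ?addbF ?negbK.
Qed.

Lemma mem_porbit_bridge_spin u v :
  (v \in porbit (bridge * spin) u) = ((twist v).1 == (twist u).1).
Proof.
by rewrite bridge_spin_conj -{1}[v]twistK -{1}[u]twistK mem_porbitJ mem_porbit_spin.
Qed.

Definition layer (b : bool) : {set T} := setX [set b] setT.
Definition face (b : bool) : {set T} := twist @^-1: layer b.
Definition rung (i : 'I_k) : {set T} := [set (false, i); (true, i)].

Lemma mem_layer b u : (u \in layer b) = (u.1 == b).
Proof. by case: u => a i; rewrite in_setX in_set1 in_setT andbT. Qed.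

Lemma mem_face b u : (u \in face b) = ((twist u).1 == b).
Proof. by rewrite inE mem_layer. Qed.

Lemma card_layer b : #|layer b| = k.
Proof. by rewrite cardsX cards1 cardsT card_ord mul1n. Qed.

Lemma card_face b : #|face b| = k.
Proof. by rewrite card_preimset ?card_layer //; apply: perm_inj. Qed.

Lemma twist0 b : twist (b, ord0) = (b, ord0).
Proof. by rewrite permE /twist_fun /= addbF. Qed.

Lemma eq_layer b c : (layer b == layer c) = (b == c).
Proof.
apply/eqP/eqP => [eq_bc|-> //].
by have := mem_layer b (b, ord0); rewrite eq_bc mem_layer /= eqxx => /eqP.
Qed.

Lemma eq_face b c : (face b == face c) = (b == c).
Proof.
apply/eqP/eqP => [eq_bc|-> //].
by have := mem_face b (b, ord0); rewrite eq_bc !mem_face twist0 /= eqxx => /eqP.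
Qed.

Lemma rung0_neq_rung1 : rung ord0 != rung ord_one.
Proof. by apply/eqP => /setP/(_ (false, ord0)); rewrite !inE. Qed.

Lemma porbit_spin u : porbit spin u = layer u.1.
Proof. by apply/setP => v; rewrite mem_layer mem_porbit_spin. Qed.

Lemma porbit_bridge_spin u : porbit (bridge * spin) u = face (twist u).1.
Proof. by apply/setP => v; rewrite mem_face mem_porbit_bridge_spin. Qed.

Lemma porbits_spin : porbits spin = [set layer false; layer true].
Proof. by apply: (porbits_bool porbit_spin (a0 := (false, ord0)) (a1 := (true, ord0))). Qed.

Lemma porbits_bridge_spin : porbits (bridge * spin) = [set face false; face true].
Proof.
by apply: (porbits_bool porbit_bridge_spin (a0 := (false, ord0)) (a1 := (true, ord0)));
  rewrite twist0.
Qed.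

Lemma layer_meets_face b c : layer b :&: face c != set0.
Proof.
apply/set0Pn; exists (b, if b == c then ord0 else ord_one).
by rewrite inE mem_layer mem_face permE; case: b; case: c.
Qed.

Lemma bridge_changes_face u :
  (porbit (bridge * spin) u != porbit (bridge * spin) (bridge u)) = (u.2 < 2).
Proof.
rewrite !porbit_bridge_spin eq_face; case: u => b i /=.
case: (ltnP i 2) => [i_lt2 | i_ge2]; last by rewrite bridge_high ?eqxx.
by rewrite bridge_low // !permE /twist_fun /= addNb; case: (_ (+) _).
Qed.

Lemma bridge_rung (u : T) : u.2 < 2 -> [set u; bridge u] = rung u.2.
Proof. by case: u => [[] i] /= i_lt2; rewrite bridge_low // setUC. Qed.

Lemma common_vertices_ladder :
  common_vertices bridge spin = [set V in [:: layer false; layer true]].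
Proof.
apply/setP => V; rewrite !inE porbits_spin !inE.
apply/andP/idP => [[] // | V_layer]; split => //.
apply/forall_inP => O; rewrite porbits_bridge_spin.
by case/orP: V_layer => /eqP-> /set2P[] ->; apply: layer_meets_face.
Qed.

Lemma common_edges_ladder :
  common_edges bridge spin = [set e in [:: rung ord0; rung ord_one]].
Proof.
apply/setP => e; rewrite !inE; apply/imsetP/idP => [[u] | ].
  rewrite inE bridge_changes_face => u2_lt2 ->; rewrite bridge_rung //.
  have [-> | ->] : u.2 = ord0 \/ u.2 = ord_one.
    by case: u u2_lt2 => b [[|[|//]] i_lt] _; [left | right]; apply: val_inj.
  - by rewrite eqxx.
  - by rewrite eqxx orbT.
by case/orP=> /eqP ->; [exists (false, ord0) | exists (false, ord_one)];
  rewrite ?inE ?bridge_changes_face ?bridge_rung.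
Qed.

Lemma joins_rung b (i : 'I_k) :
  i < 2 -> joins bridge spin (rung i) (layer b) (layer (~~ b)).
Proof.
move=> i_lt2; exists (b, i); rewrite bridge_rung // !porbit_spin.
by rewrite bridge_low.
Qed.

Lemma ladder_transitive u v : exists2 g, g \in <<[set bridge; spin]>> & g u = v.
Proof.
have [i u_i] : exists i, (u.1, ord0) = (spin ^+ i) u.
  by apply/porbitP; rewrite mem_porbit_spin.
have [j v_j] : exists j, v = (spin ^+ j) (v.1, ord0).
  by apply/porbitP; rewrite mem_porbit_spin.
pose h := if u.1 == v.1 then 1 else bridge.
have h_u0 : h (u.1, ord0) = (v.1, ord0).
  rewrite /h; case: eqP => [-> | /eqP]; first by rewrite perm1.
  by rewrite bridge_low //; case: u.1; case: v.1.
exists (spin ^+ i * h * spin ^+ j); last by rewrite !permM -u_i h_u0 -v_j.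
have [x_gen y_gen] : bridge \in <<[set bridge; spin]>> /\ spin \in <<[set bridge; spin]>>.
  by split; apply: mem_gen; rewrite !inE eqxx ?orbT.
by rewrite !groupM ?groupX // /h; case: ifP.
Qed.

Lemma ladder_triangle_action : triangle_action k bridge spin.
Proof.
split; last exact: ladder_transitive.
- by apply/permP => u; rewrite expgS expg1 permM bridgeK perm1.
- exact: order_spin.
- by exists #[bridge * spin]; [exact: order_gt0 | exact: expg_order].
Qed.

Lemma ladder_januarial : januarial k bridge spin.
Proof.
split; first exact: ladder_triangle_action.
  by rewrite porbits_bridge_spin cards2 eq_face.
move=> O; rewrite porbits_bridge_spin card_prod card_bool card_ord mulnC.
by case/set2P=> ->; rewrite card_face.
Qed.

Lemma ladder_common_graph_is_simple_circuit : common_graph_is_simple_circuit bridge spin.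
Proof.
exists 2, [:: layer false; layer true], [:: rung ord0; rung ord_one].
split; first by split => //=; rewrite inE andbT ?eq_layer ?rung0_neq_rung1.
split; [exact: common_vertices_ladder | exact: common_edges_ladder |].
by case=> [|[|//]] _; apply: joins_rung.
Qed.

End Ladder.

Theorem theorem2 (k : nat) : 2 <= k ->
  exists (T : finType) (x y : {perm T}), januarial_simple_h1 k x y.
Proof.
case: k => [|[|n]] // _.
exists (bool * 'I_n.+2)%type, (bridge n), (spin n); split.
- exact: ladder_januarial.
- exact: ladder_common_graph_is_simple_circuit.
Qed.
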